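(* Consider a stationary memoryless uncertain channel with single-symbol map $N$ as described in the context, and let $0\le\delta_1<m_{\mathscr{Y}}(V_N)$. Let $\bar X$ be a one-step transmitted UV with $[\![\bar X]\!]\subseteq\mathscr{X}$, $\bar Y$ its received UV, and $\bar\delta\ge0$ such that $\bar X\in\mathscr{F}_{\bar\delta}(1)$, $\bar\delta\le\delta_1/m_{\mathscr{Y}}([\![\bar Y]\!])$, and $$I_{\bar\delta/|[\![\bar X]\!]|}(\bar Y;\bar X)=\sup\Big\{I_{\tilde\delta/|[\![X(1)]\!]|}(Y(1);X(1)) : \tilde\delta\ge0,\ X(1)\in\mathscr{F}_{\tilde\delta}(1),\ \tilde\delta\le\delta_1/m_{\mathscr{Y}}([\![Y(1)]\!])\Big\}.$$ Suppose that (a) for every $x\in\mathscr{X}\setminus[\![\bar X]\!]$ there is $S\in[\![\bar Y|\bar X]\!]^*_{\bar\delta/|[\![\bar X]\!]|}$ with $N(x)\subseteq S$; (b) $\bar\delta(1+1/|[\![\bar X]\!]|)\le\delta_1/m_{\mathscr{Y}}([\![\bar Y]\!])$; and (c) for all $n>1$, $0\le\delta_n\le(\bar\delta\, m_{\mathscr{Y}}(V_N)/|[\![\bar X]\!]|)^n$. Then, under the product uncertainty assumption and the union bound assumption, $C_N(\{\delta_n\})^*=I_{\bar\delta/|[\![\bar X]\!]|}(\bar Y;\bar X)$.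
   Context: Uncertain variables (UVs): a UV is a map $U$ from a sample space $\Omega$ to a set; jointly considered UVs share $\Omega$. $[\![U]\!]=\{U(\omega)\}$; $[\![U|w]\!]=\{U(\omega):W(\omega)=w\}$, $[\![U|W]\!]=\{[\![U|w]\!]:w\in[\![W]\!]\}$. An uncertainty function on a set $\mathscr{U}$ is a map $m$ on subsets of $\mathscr{U}$ with $m(\emptyset)=0$, $0<m(S)<\infty$ for nonempty $S$, $\max\{m(S_1),m(S_2)\}\le m(S_1\cup S_2)$. Association: $\mathscr{A}(X;Y)=\{m_{\mathscr{X}}([\![X|y_1]\!]\cap[\![X|y_2]\!])/m_{\mathscr{X}}([\![X]\!]):y_1\ne y_2\in[\![Y]\!]\}\setminus\{0\}$, $\mathscr{A}(Y;X)=\{m_{\mathscr{Y}}([\![Y|x_1]\!]\cap[\![Y|x_2]\!])/m_{\mathscr{Y}}([\![Y]\!]):x_1\ne x_2\in[\![X]\!]\}\setminus\{0\}$; $\mathscr{A}\succ\delta$: all elements $>\delta$ (false for $\emptyset$); $\mathscr{A}\preceq\delta$: all elements $\le\delta$ (true for $\emptyset$); $(X,Y)\stackrel{d}{\leftrightarrow}(\delta_1,\delta_2)$ iff $\mathscr{A}(X;Y)\succ\delta_1,\mathscr{A}(Y;X)\succ\delta_2$; $(X,Y)\stackrel{a}{\leftrightarrow}(\delta_1,\delta_2)$ iff $\mathscr{A}(X;Y)\preceq\delta_1,\mathscr{A}(Y;X)\preceq\delta_2$. $\delta$-mutual information: for UVs $U$ (with uncertainty function $m_{\mathscr{U}}$)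 and $W$, $u,u'\in[\![U]\!]$ are $\delta$-connected via $[\![U|W]\!]$ if there are $w_1,\dots,w_N\in[\![W]\!]$ with $u\in[\![U|w_1]\!]$, $u'\in[\![U|w_N]\!]$, $m_{\mathscr{U}}([\![U|w_i]\!]\cap[\![U|w_{i-1}]\!])/m_{\mathscr{U}}([\![U]\!])>\delta$ for $1<i\le N$; a set is $\delta$-connected if all pairs of its points are. A $\delta$-overlap family $[\![U|W]\!]^*_\delta$ is a family of distinct subsets covering $[\![U]\!]$, of largest cardinality among covering families with (i) each member $\delta$-connected and containing some $[\![U|w]\!]$; (ii) distinct members $S_1,S_2$ satisfy $m_{\mathscr{U}}(S_1\cap S_2)\le\delta\,m_{\mathscr{U}}([\![U]\!])$; (iii) each $[\![U|w]\!]$ contained in some member. $I_\delta(U;W)=\log_2|[\![U|W]\!]^*_\delta|$ if such a family exists, else $0$. Stationary memoryless channel: $\mathscr{X}$ is a totally bounded normed metric space, $\mathscr{Y}$ an output set, $N:\mathscr{X}\to2^{\mathscr{Y}}$; for $x(1:n)\in\mathscr{X}^n$, $S_N(x(1:n))=N(x(1))\times\cdots\times N(x(n))$. $m_{\mathscr{Y}}$ (resp. $m_{\mathscr{X}}$) is an uncertainty function on each $\mathscr{Y}^n$ (resp. $\mathscr{X}^n$), with $m_{\mathscr{Y}}(\mathscr{Y}^n)=1$. $V_N=N(x^* )$ with $x^*$ minimizing $m_{\mathscr{Y}}(N(x))$; $V_N^n=V_N\times\cdots\times V_N$. A discrete $\mathcal{C}_n\subseteq\mathscr{X}^n$ is $(N,\delta_n)$-distinguishable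 (for $0\le\delta_n<m_{\mathscr{Y}}(V_N^n)$) if $m_{\mathscr{Y}}(S_N(x_1(1:n))\cap S_N(x_2(1:n)))/m_{\mathscr{Y}}(\mathscr{Y}^n)\le\delta_n/|\mathcal{C}_n|$ for all distinct codewords; $R_{\delta_n}=\sup\frac1n\log_2|\mathcal{C}_n|$ over such codebooks; $C_N(\{\delta_n\})^*=\sup_{n\ge1}R_{\delta_n}$. For a codebook $\mathcal{C}_n$, transmitted UV $X(1:n)$ and received UV $Y(1:n)$ satisfy $[\![X(1:n)]\!]=\mathcal{C}_n$, $[\![Y(1:n)]\!]=\bigcup_{x(1:n)\in\mathcal{C}_n}S_N(x(1:n))$, $[\![Y(1:n)|x(1:n)]\!]=\{y\in[\![Y(1:n)]\!]:y\in S_N(x(1:n))\}$, $[\![X(1:n)|y(1:n)]\!]=\{x\in[\![X(1:n)]\!]:y(1:n)\in S_N(x)\}$. $\mathscr{F}_\delta(n)$ is the set of transmitted UVs $X(1:n)$ with $[\![X(1:n)]\!]\subseteq\mathscr{X}^n$ such that $(X(1:n),Y(1:n))\stackrel{d}{\leftrightarrow}(0,\delta/|[\![X(1:n)]\!]|)$ or $(X(1:n),Y(1:n))\stackrel{a}{\leftrightarrow}(1,\delta/|[\![X(1:n)]\!]|)$. Product uncertainty assumption: $m_{\mathscr{Y}}(S_1\times\cdots\times S_n)=\prod_i m_{\mathscr{Y}}(S_i)$ for all $n$ and $S_i\subseteq\mathscr{Y}$. Union bound assumption: $m_{\mathscr{Y}}(S_1\cup S_2)\le m_{\mathscr{Y}}(S_1)+m_{\mathscr{Y}}(S_2)$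 for $S_1,S_2\subseteq\mathscr{Y}^n$. *)

From HB Require Import structures.
From mathcomp Require Import all_boot all_order all_algebra finmap.
From mathcomp Require Import boolp classical_sets functions cardinality.
From mathcomp Require Import reals ereal topology exp.
Set Implicit Arguments. Unset Strict Implicit. Unset Printing Implicit Defensive.
Import Order.TTheory GRing.Theory Num.Theory.
Local Open Scope classical_set_scope.
Local Open Scope ring_scope.

Section UV.
Variable R : realType.

Definition urange (Om T : Type) (U : Om -> T) : set T := U @` setT.
Definition ucrange (Om T S : Type) (U : Om -> T) (W : Om -> S) (w : S) : set T :=
  U @` (W @^-1` [set w]).

Definition uncertainty_function (T : Type) (m : set T -> R) : Prop :=
  m set0 = 0 /\ (forall A, A !=set0 -> 0 < m A) /\
  (forall A B, Num.max (m A) (m B) <= m (A `|` B)).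

Definition assoc (Om T S : Type) (m : set T -> R) (U : Om -> T) (W : Om -> S) : set R :=
  [set r | exists w1 w2, urange W w1 /\ urange W w2 /\ w1 <> w2 /\
     r = m (ucrange U W w1 `&` ucrange U W w2) / m (urange U) /\ r <> 0].

(* A > d (false for the empty set) and A <= d (true for the empty set) *)
Definition assoc_gt (A : set R) (d : R) : Prop := A !=set0 /\ forall r, A r -> d < r.
Definition assoc_le (A : set R) (d : R) : Prop := forall r, A r -> r <= d.

Definition dissoc (Om TX TY : Type) (mX : set TX -> R) (mY : set TY -> R)
  (X : Om -> TX) (Y : Om -> TY) (d1 d2 : R) : Prop :=
  assoc_gt (assoc mX X Y) d1 /\ assoc_gt (assoc mY Y X) d2.
Definition associated (Om TX TY : Type) (mX : set TX -> R) (mY : set TY -> R)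
  (X : Om -> TX) (Y : Om -> TY) (d1 d2 : R) : Prop :=
  assoc_le (assoc mX X Y) d1 /\ assoc_le (assoc mY Y X) d2.

Section Idelta.
Variables (Om T S : Type) (m : set T -> R) (U : Om -> T) (W : Om -> S) (d : R).

(* u, u' are d-connected via [[U|W]]  (chain w 0, ..., w k, i.e. N = k+1 >= 1) *)
Definition dconnected (u u' : T) : Prop :=
  exists (k : nat) (w : nat -> S),
    (forall i, (i <= k)%N -> urange W (w i)) /\
    ucrange U W (w 0%N) u /\ ucrange U W (w k) u' /\
    (forall i, (0 < i <= k)%N ->
       d < m (ucrange U W (w i) `&` ucrange U W (w i.-1)) / m (urange U)).

Definition dconnected_set (A : set T) : Prop :=
  forall u u', A u -> A u' -> dconnected u u'.

Definition admissible_family (F : set (set T)) : Prop :=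
  (forall A, F A -> A `<=` urange U) /\
  (forall u, urange U u -> exists A, F A /\ A u) /\
  (forall A, F A -> dconnected_set A /\
                    exists w, urange W w /\ ucrange U W w `<=` A) /\
  (forall A1 A2, F A1 -> F A2 -> A1 <> A2 -> m (A1 `&` A2) <= d * m (urange U)) /\
  (forall w, urange W w -> exists A, F A /\ ucrange U W w `<=` A).

Definition overlap_family (F : set (set T)) : Prop :=
  admissible_family F /\ forall G, admissible_family G -> card_le G F.

Definition log2 (x : R) : R := ln x / ln 2.

(* I_d(U;W) = log2 |[[U|W]]*_d| if an overlap family exists (+oo if infinite), else 0.
   (All overlap families have the same cardinality, so the set below is a singleton.) *)
Definition Idelta : \bar R :=
  ereal_sup [set v : \bar R |
    (exists F, overlap_family F /\
       ((exists k : nat, card_eq F `I_k /\ v = (log2 k%:R)%:E) \/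
        (infinite_set F /\ v = +oo%E))) \/
    ((forall F, ~ overlap_family F) /\ v = 0%E)].
End Idelta.

Section Channel.
Variables (X : choiceType) (Y : Type) (N : X -> set Y).

(* one-step transmitted / received UVs of a (finite, nonempty) codebook C subset of X:
   sample space Om_C = {(x,y) | x in C, y in N x}, X(1) = first, Y(1) = second projection.
   Then [[X(1)]] = C, [[Y(1)]] = U_{x in C} N x, [[Y(1)|x]] = N x, [[X(1)|y]] = {x in C | y in N x}. *)
Definition chOm (C : {fset X}) := {p : X * Y | p.1 \in C /\ N p.1 p.2}.
Definition chX (C : {fset X}) : chOm C -> X := fun o => (proj1_sig o).1.
Definition chY (C : {fset X}) : chOm C -> Y := fun o => (proj1_sig o).2.

Definition inF1 (mX : set X -> R) (mY : set Y -> R) (d : R) (C : {fset X}) : Prop :=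
  C != fset0 /\
  (dissoc mX mY (@chX C) (@chY C) 0 (d / (#|` C|)%:R) \/
   associated mX mY (@chX C) (@chY C) 1 (d / (#|` C|)%:R)).

Definition I1 (mY : set Y -> R) (d : R) (C : {fset X}) : \bar R :=
  Idelta mY (@chY C) (@chX C) (d / (#|` C|)%:R).

Definition rangeY1 (C : {fset X}) : set Y := urange (@chY C).

Definition SN n (x : n.-tuple X) : set (n.-tuple Y) :=
  [set y | forall i, N (tnth x i) (tnth y i)].

Definition distinguishable (mYn : forall n, set (n.-tuple Y) -> R)
  n (C : {fset n.-tuple X}) (dn : R) : Prop :=
  forall x1 x2, x1 \in C -> x2 \in C -> x1 != x2 ->
    mYn n (SN x1 `&` SN x2) / mYn n setT <= dn / (#|` C|)%:R.

Definition rate (mYn : forall n, set (n.-tuple Y) -> R) n (dn : R) : \bar R :=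
  ereal_sup [set ((log2 (#|` C|)%:R) / n%:R)%:E |
     C in [set C : {fset n.-tuple X} | C != fset0 /\ distinguishable mYn C dn]].

Definition capacity (mYn : forall n, set (n.-tuple Y) -> R) (delta : nat -> R) : \bar R :=
  ereal_sup [set rate mYn n (delta n) | n in [set n : nat | (0 < n)%N]].
End Channel.

Definition totally_bounded (X : pseudoMetricType R) : Prop :=
  forall e : R, 0 < e -> exists s : seq X, forall x : X, exists2 c, c \in s & ball c e x.

End UV.

From HB Require Import structures.
From mathcomp Require Import all_boot all_order all_algebra finmap.
From mathcomp Require Import boolp classical_sets functions cardinality.
From mathcomp Require Import reals ereal topology exp.
From mathcomp Require Import ring.
Import Order.TTheory GRing.Theory Num.Theory.
Local Open Scope classical_set_scope.
Local Open Scope ring_scope.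
Local Open Scope card_scope.

(* Every symbol set [N x] has uncertainty above [delta 1], whereas two distinct
   members of the overlap family [F] of the optimal one-shot code overlap by at
   most [delta 1 / (|Cb| + 1)].  Hence each [N x] lies in exactly one member of
   [F], its cluster, and choosing one codeword of [Cb] per cluster yields a set
   [reps] of [|F|] symbols.  Optimality of [Cb] forces two distinct symbols of
   one cluster to overlap by more than [delta 1 / (|F| + 1)]: otherwise both,
   together with the other representatives, would form a one-shot code of size
   [|F| + 1] with a larger delta-mutual information.  By the product assumption
   the codewords of a distinguishable n-block code then have pairwise distinct
   sequences of clusters, so there are at most [|F|^n] of them, while [reps]
   itself is distinguishable for [n = 1]. *)

Set Implicit Arguments.
Unset Strict Implicit.
Unset Printing Implicit Defensive.

Section UncertaintyFunction.
Variables (R : realType) (T : Type) (m : set T -> R).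
Hypothesis hm : uncertainty_function m.

Lemma le_uncertainty A B : A `<=` B -> m A <= m B.
Proof.
case: hm => _ [_ hmax] AB; have := hmax A B.
by rewrite (setUidr AB) ge_max => /andP[].
Qed.

Lemma uncertainty_gt0 A : A !=set0 -> 0 < m A.
Proof. by case: hm => _ [+ _]; apply. Qed.

Lemma uncertainty_neq0 A : 0 < m A -> A !=set0.
Proof.
by move=> mA; apply/set0P; apply: contraTneq mA => ->; case: hm => ->; rewrite ltxx.
Qed.

Lemma uncertainty_ge0 A : 0 <= m A.
Proof.
have [->|/set0P A0] := eqVneq A set0; first by case: hm => ->.
exact/ltW/uncertainty_gt0.
Qed.

End UncertaintyFunction.

Section RealArithmetic.
Variable R : realType.

Lemma ler_log2n (a b : nat) : (0 < a)%N -> (0 < b)%N ->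
  (log2 a%:R <= log2 b%:R :> R) = (a <= b)%N.
Proof.
move=> a0 b0; have ln2 : 0 < ln (2 : R) by rewrite ln_gt0 // ltr1n.
by rewrite /log2 ler_pM2r ?invr_gt0 // ler_ln ?posrE ?ltr0n // ler_nat.
Qed.

Lemma log2Xn (k n : nat) : (0 < k)%N -> log2 (k ^ n)%:R = n%:R * log2 k%:R :> R.
Proof. by move=> k0; rewrite /log2 natrX lnXn ?ltr0n // mulr_natl mulrnAl. Qed.

Lemma log2_div_le (c k n : nat) : (0 < c)%N -> (0 < n)%N ->
  (c <= k ^ n)%N -> log2 c%:R / n%:R <= log2 k%:R :> R.
Proof.
move=> c0 n0 ckn; have : (0 < k ^ n)%N := leq_trans c0 ckn.
rewrite expn_gt0 => /orP[k0|/eqP n_eq0]; last by rewrite n_eq0 in n0.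
by rewrite ler_pdivrMr ?ltr0n // mulrC -log2Xn // ler_log2n // expn_gt0 k0.
Qed.

Lemma ler_pdivn (x : R) (k : nat) : 0 <= x -> (0 < k)%N -> x / k%:R <= x.
Proof. by move=> x_ge0 k_gt0; rewrite ler_pdivrMr ?ltr0n // ler_peMr // ler1n. Qed.

Lemma ler_divSn (a d r : R) (k : nat) : (0 < k)%N -> 0 < r ->
  a * (1 + 1 / k%:R) <= d / r -> a / k%:R * r <= d / k.+1%:R.
Proof.
move=> k_gt0 r_gt0 le_ad.
have -> : a / k%:R * r = a * (1 + 1 / k%:R) * r / k.+1%:R.
  by rewrite -addn1 natrD; field; rewrite !gt_eqF ?addr_gt0 ?ltr0n.
by rewrite ler_pM2r ?invr_gt0 ?ltr0n // -ler_pdivlMr.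
Qed.

End RealArithmetic.

Lemma ucrange_sub_urange (Om T S : Type) (U : Om -> T) (W : Om -> S) w :
  ucrange U W w `<=` urange U.
Proof. by move=> _ [o _ <-]; exists o. Qed.

Lemma Idelta_fset_image (R : realType) (Om T S : Type) (m : set T -> R)
    (U : Om -> T) (W : Om -> S) (d : R) (F : set (set T))
    (K : choiceType) (A : {fset K}) (f : K -> set T) :
  overlap_family m U W d F -> F = f @` [set` A] -> {in A &, injective f} ->
  Idelta m U W d = (log2 #|` A|%:R)%:E.
Proof.
move=> oF Fe finj.
have FA : F #= `I_#|` A|.
  rewrite Fe; apply: card_eq_trans (inj_card_eq _) _; last exact/card_eq_fsetP.
  by move=> a b; rewrite !in_setE; apply: finj.
have eqF G : overlap_family m U W d G -> G #= F.
  by move=> oG; rewrite card_eq_le (oF.2 _ oG.1) (oG.2 _ oF.1).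
rewrite /Idelta; set V := [set v | _].
suff -> : V = [set (log2 #|` A|%:R)%:E] by rewrite ereal_sup1.
apply/seteqP; split => [v|v ->]; last by left; exists F; split => //; left; exists #|` A|.
case=> [[G [oG [[k [Gk ->]]|[Ginf _]]]]|[noF _]]; last by case: (noF F).
- have /card_eq_II -> // : `I_k #= `I_#|` A|.
  exact: card_eq_trans (card_esym Gk) (card_eq_trans (eqF G oG) FA).
- by case: Ginf; exists #|` A|; apply: card_eq_trans (eqF G oG) FA.
Qed.

Section OneShotChannel.
Variables (R : realType) (X : choiceType) (Y : Type) (N : X -> set Y).
Implicit Types (C : {fset X}) (m : set Y -> R).

Lemma ucrange_chYX C w : w \in C -> ucrange (@chY X Y N C) (@chX X Y N C) w = N w.
Proof.
move=> wC; apply/seteqP; split => [_ [[[x y] [_ Nxy]] /= <- <-] //|y Nwy].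
by exists (exist _ (w, y) (conj wC Nwy)).
Qed.

Lemma urange_chX_in C w : urange (@chX X Y N C) w -> w \in C.
Proof. by move=> [[[x y] [xC Nxy]] _ <-]. Qed.

Lemma urange_chX C w : w \in C -> N w !=set0 -> urange (@chX X Y N C) w.
Proof. by move=> wC [y Nwy]; exists (exist _ (w, y) (conj wC Nwy)). Qed.

Lemma urange_chY_in C y : urange (@chY X Y N C) y -> exists2 x, x \in C & N x y.
Proof. by move=> [[[x y'] [xC Nxy]] _ <-]; exists x. Qed.

Lemma sub_urange_chY C w : w \in C -> N w `<=` urange (@chY X Y N C).
Proof. by move=> wC y Nwy; exists (exist _ (w, y) (conj wC Nwy)). Qed.

Definition overlap_le m C (e : R) : Prop :=
  {in C &, forall x x', x != x' -> m (N x `&` N x') <= e}.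

Lemma admissible_rep m C d F :
  admissible_family m (@chY X Y N C) (@chX X Y N C) d F -> C != fset0 ->
  exists rep : set Y -> X, forall S, F S -> rep S \in C /\ N (rep S) `<=` S.
Proof.
move=> [_ [_ [F_conn _]]] C_neq0.
suff /choice[rep repP] : forall S, exists b, F S -> b \in C /\ N b `<=` S.
  by exists rep.
move=> S; have [FS|nFS] := pselect (F S); last first.
  by have [x _] := fset0Pn _ C_neq0; exists x.
have [w [/urange_chX_in wC sub]] := (F_conn S FS).2.
by exists w => _; rewrite -(ucrange_chYX wC).
Qed.

Lemma admissible_cover m C d F :
  admissible_family m (@chY X Y N C) (@chX X Y N C) d F ->
  (forall x, N x !=set0) -> (forall x, x \notin C -> exists S, F S /\ N x `<=` S) ->
  exists cluster : X -> set Y, forall x, F (cluster x) /\ N x `<=` cluster x.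
Proof.
move=> [_ [_ [_ [_ F_in]]]] N_neq0 F_out.
suff /choice[cluster clusterP] : forall x, exists S, F S /\ N x `<=` S.
  by exists cluster.
move=> x.
have [xC|/F_out //] := boolP (x \in C).
have [S [FS sub]] := F_in x (urange_chX xC (N_neq0 x)).
by exists S; rewrite -(ucrange_chYX xC).
Qed.

Section Code.
Variables (mX : set X -> R) (mY1 : set Y -> R).
Hypotheses (hmX : uncertainty_function mX) (hmY1 : uncertainty_function mY1).
Variables (d1 : R) (C : {fset X}).
Hypotheses (d1_ge0 : 0 <= d1) (C_neq0 : C != fset0).
Hypothesis d1_lt_N : {in C, forall x, d1 < mY1 (N x)}.
Hypothesis C_overlap : overlap_le mY1 C (d1 / #|` C|%:R).

Let XC := @chX X Y N C.
Let YC := @chY X Y N C.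

Let le_d1 : d1 / #|` C|%:R <= d1.
Proof. by rewrite ler_pdivn ?cardfs_gt0. Qed.

Let N_neq0 x : x \in C -> N x !=set0.
Proof. by move=> xC; apply: (uncertainty_neq0 hmY1); apply: le_lt_trans (d1_lt_N xC). Qed.

Let rangeY1_gt0 : 0 < mY1 (rangeY1 N C).
Proof.
have [x xC] := fset0Pn _ C_neq0.
apply: lt_le_trans (le_uncertainty hmY1 (sub_urange_chY xC)).
exact: le_lt_trans d1_ge0 (d1_lt_N xC).
Qed.

Lemma code_inF1 : inF1 N mX mY1 (d1 / mY1 (rangeY1 N C)) C.
Proof.
split=> //; right; split=> _ [w1 [w2 [w1X [w2X [w12 [-> _]]]]]].
  have [x xC] := fset0Pn _ C_neq0.
  have mX_gt0 : 0 < mX (urange XC).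
    by apply: (uncertainty_gt0 hmX); exists x; exact: urange_chX xC (N_neq0 xC).
  rewrite ler_pdivrMr // mul1r; apply: (le_uncertainty hmX).
  by move=> x' [+ _]; apply: ucrange_sub_urange.
have w1C := urange_chX_in w1X; have w2C := urange_chX_in w2X.
rewrite !ucrange_chYX // mulrAC ler_pM2r ?invr_gt0 //.
by apply: C_overlap => //; apply/eqP.
Qed.

Let level := d1 / mY1 (rangeY1 N C) / #|` C|%:R.

Let level_mul : level * mY1 (rangeY1 N C) = d1 / #|` C|%:R.
Proof. by rewrite /level mulrAC divfK // gt_eqF. Qed.

Let N_gt_level x : x \in C -> d1 / #|` C|%:R < mY1 (N x).
Proof. by move=> xC; apply: le_lt_trans le_d1 (d1_lt_N xC). Qed.

Lemma code_N_inj : {in C &, injective N}.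
Proof.
move=> x x' xC x'C eN; apply/eqP; apply: contraT => xx'.
by have := C_overlap xC x'C xx'; rewrite eN setIid leNgt N_gt_level.
Qed.

Lemma code_admissible : admissible_family mY1 YC XC level (N @` [set` C]).
Proof.
split; first by move=> _ [w /= wC <-]; apply: sub_urange_chY.
split; first by move=> y /urange_chY_in [x xC Nxy]; exists (N x); split => //; exists x.
split.
  move=> _ [w /= wC <-]; split; last first.
    by exists w; rewrite ucrange_chYX //; split => //; exact: urange_chX wC (N_neq0 wC).
  move=> u u' Nu Nu'; exists 0%N, (fun => w).
  rewrite !ucrange_chYX //; split; first by move=> *; exact: urange_chX wC (N_neq0 wC).
  by do 2!split => //; move=> [].
split.
  move=> _ _ [w1 /= w1C <-] [w2 /= w2C <-] ne; rewrite level_mul.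
  by apply: C_overlap => //; apply/eqP => e; apply: ne; rewrite e.
move=> w /urange_chX_in wC; rewrite ucrange_chYX //.
by exists (N w); split => //; exists w.
Qed.

Lemma code_card_ge G : admissible_family mY1 YC XC level G -> G #<= N @` [set` C].
Proof.
move=> G_adm; have [g gP] := admissible_rep G_adm C_neq0.
have [_ [_ [_ [Goverlap _]]]] := G_adm.
have ginj : {in G &, injective (N \o g)}.
  move=> A1 A2; rewrite !in_setE => GA1 GA2 /= eN; apply: contrapT => ne.
  have [g1C g1A] := gP _ GA1; have [_ g2A] := gP _ GA2.
  have sub : N (g A1) `<=` A1 `&` A2.
    by move=> y Ny; split; [exact: g1A|apply: g2A; rewrite -eN].
  have := le_trans (le_uncertainty hmY1 sub) (Goverlap _ _ GA1 GA2 ne).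
  by rewrite level_mul leNgt N_gt_level.
apply: card_le_trans (_ : G #<= (N \o g) @` G) _.
  by move: (inj_card_eq ginj); rewrite card_eq_le => /andP[].
apply: subset_card_le => _ [A GA <-]; exists (g A) => //=.
by have [] := gP _ GA.
Qed.

Lemma code_I1 : I1 N mY1 (d1 / mY1 (rangeY1 N C)) C = (log2 #|` C|%:R)%:E.
Proof.
apply: (Idelta_fset_image _ erefl code_N_inj).
by split; [exact: code_admissible|exact: code_card_ge].
Qed.

End Code.

Lemma code_card_le (mX : set X -> R) (mY1 : set Y -> R) (d1 : R) (k : nat) :
  uncertainty_function mX -> uncertainty_function mY1 -> 0 <= d1 -> (0 < k)%N ->
  (forall dt C, 0 <= dt -> inF1 N mX mY1 dt C -> dt <= d1 / mY1 (rangeY1 N C) ->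
     (I1 N mY1 dt C <= (log2 k%:R)%:E)%E) ->
  forall C, C != fset0 -> {in C, forall x, d1 < mY1 (N x)} ->
  overlap_le mY1 C (d1 / #|` C|%:R) -> (#|` C| <= k)%N.
Proof.
move=> hmX hmY1 d1_ge0 k_gt0 I1_le C C_neq0 d1_lt_N C_overlap.
have := I1_le _ C _ (code_inF1 hmX hmY1 d1_ge0 C_neq0 d1_lt_N C_overlap) (lexx _).
rewrite (code_I1 hmY1 d1_ge0 C_neq0 d1_lt_N C_overlap) lee_fin.
rewrite ler_log2n ?cardfs_gt0 //; apply.
exact/divr_ge0/(uncertainty_ge0 hmY1).
Qed.

End OneShotChannel.

Section Rates.
Variables (R : realType) (X : choiceType) (Y : Type) (N : X -> set Y).
Variable mY : forall n, set (n.-tuple Y) -> R.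
Arguments mY : clear implicits.

Lemma rate_le_log2 n dn (k : nat) : (0 < n)%N ->
  (forall C : {fset n.-tuple X}, C != fset0 -> distinguishable N mY C dn ->
     (#|` C| <= k ^ n)%N) ->
  (rate N mY n dn <= (log2 k%:R)%:E)%E.
Proof.
move=> n_gt0 C_le; apply: ge_ereal_sup => _ [C [C_neq0 C_dist] <-].
by rewrite lee_fin log2_div_le ?cardfs_gt0 ?C_le.
Qed.

Lemma capacity_eq (delta : nat -> R) v :
  (forall n, (0 < n)%N -> (rate N mY n (delta n) <= v)%E) ->
  (v <= rate N mY 1 (delta 1%N))%E -> capacity N mY delta = v.
Proof.
move=> rate_le v_le; apply/eqP; rewrite eq_le; apply/andP; split.
  by apply: ge_ereal_sup => _ [n n_gt0 <-]; apply: rate_le.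
by apply: le_trans v_le _; apply: ereal_sup_ubound; exists 1%N.
Qed.

Variable mY1 : set Y -> R.
Hypothesis mY_prod : forall n (S : 'I_n -> set Y), (0 < n)%N ->
  mY n [set y | forall i, S i (tnth y i)] = \prod_(i < n) mY1 (S i).
Hypothesis mY_setT : forall n, (0 < n)%N -> mY n setT = 1.

Lemma SN_setI n (x1 x2 : n.-tuple X) :
  SN N x1 `&` SN N x2 = [set y | forall i, (N (tnth x1 i) `&` N (tnth x2 i)) (tnth y i)].
Proof.
apply/seteqP; split => y /=; first by move=> [h1 h2] i; split.
by move=> h; split => i; case: (h i).
Qed.

Lemma distinguishable_card_le (K : finType) (f : X -> K) (t dn : R) n
    (C : {fset n.-tuple X}) :
  0 <= t -> (forall x x', f x = f x' -> t < mY1 (N x `&` N x')) -> (0 < n)%N ->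
  distinguishable N mY C dn -> dn / #|` C|%:R <= t ^+ n -> (#|` C| <= #|K| ^ n)%N.
Proof.
move=> t_ge0 f_overlap n_gt0 C_dist dn_le.
pose g (u : C) := [tuple f (tnth (val u) i) | i < n].
suff /leq_card : injective g by rewrite card_tuple -cardfE.
move=> u1 u2 gu; apply/val_inj/eqP/negPn/negP => ne.
have f_eq i : f (tnth (val u1) i) = f (tnth (val u2) i).
  by have := congr1 (fun v => tnth v i) gu; rewrite !tnth_mktuple.
have := C_dist _ _ (valP u1) (valP u2) ne.
rewrite mY_setT // divr1 SN_setI.
rewrite (@mY_prod n (fun i => N (tnth (val u1) i) `&` N (tnth (val u2) i))) //.
apply/negP; rewrite -ltNge.
apply: le_lt_trans dn_le _.
have -> : t ^+ n = \prod_(i < n) t by rewrite prodr_const card_ord.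
apply: ltr_prod => [|i _]; last by rewrite t_ge0 f_overlap.
by apply/hasP; exists (Ordinal n_gt0); rewrite ?mem_index_enum.
Qed.

Lemma card_tuple1_fset (C : {fset X}) : #|` [fset [tuple x] | x in C]%fset| = #|` C|.
Proof. by rewrite card_in_imfset //= => x1 x2 _ _ /(congr1 (fun v => tnth v ord0)). Qed.

Lemma distinguishable_tuple1 (C : {fset X}) d : overlap_le N mY1 C (d / #|` C|%:R) ->
  distinguishable N mY [fset [tuple x] | x in C]%fset d.
Proof.
move=> C_overlap _ _ /imfsetP[x1 x1C ->] /imfsetP[x2 x2C ->] ne.
rewrite mY_setT // divr1 card_tuple1_fset SN_setI.
rewrite (@mY_prod 1 (fun i => N (tnth [tuple x1] i) `&` N (tnth [tuple x2] i))) //.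
rewrite big_ord1; apply: (C_overlap x1 x2 x1C x2C).
by apply: contraNneq ne => ->.
Qed.

Lemma rate1_ge_log2 (C : {fset X}) d : C != fset0 ->
  overlap_le N mY1 C (d / #|` C|%:R) -> ((log2 #|` C|%:R)%:E <= rate N mY 1 d)%E.
Proof.
move=> C_neq0 C_overlap; apply: ereal_sup_ubound.
exists [fset [tuple x] | x in C]%fset; last by rewrite card_tuple1_fset divr1.
split; last exact: distinguishable_tuple1.
by rewrite -cardfs_gt0 card_tuple1_fset cardfs_gt0.
Qed.

End Rates.

Section Clustering.
Variables (R : realType) (X : choiceType) (Y : Type) (N : X -> set Y).
Variables (m : set Y -> R) (F : set (set Y)) (t d1 : R) (Cb : {fset X}).
Hypothesis hm : uncertainty_function m.
Hypothesis F_overlap : forall S S', F S -> F S' -> S <> S' -> m (S `&` S') <= t.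
Hypotheses (d1_ge0 : 0 <= d1) (d1_lt_N : forall x, d1 < m (N x)).
Hypothesis t_le : t <= d1 / #|` Cb|.+1%:R.
Variables (cluster : X -> set Y) (rep : set Y -> X).
Hypothesis clusterP : forall x, F (cluster x) /\ N x `<=` cluster x.
Hypothesis repP : forall S, F S -> rep S \in Cb /\ N (rep S) `<=` S.

Let t_lt_N x : t < m (N x).
Proof. by apply: le_lt_trans t_le (le_lt_trans (ler_pdivn _ _) (d1_lt_N x)). Qed.

Lemma cluster_unique x S : F S -> N x `<=` S -> cluster x = S.
Proof.
move=> FS NS; apply: contrapT => neq; have [Fx Nx] := clusterP x.
have sub : N x `<=` cluster x `&` S by move=> y Ny; split; [exact: Nx|exact: NS].
have := lt_le_trans (t_lt_N x) (le_uncertainty hm sub).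
by rewrite ltNge F_overlap.
Qed.

Lemma cluster_rep S : F S -> cluster (rep S) = S.
Proof. by move=> FS; apply: cluster_unique => //; case: (repP FS). Qed.

Definition rep_of x := rep (cluster x).

Definition reps := [fset rep_of b | b in Cb]%fset.

Lemma cluster_rep_of x : cluster (rep_of x) = cluster x.
Proof. by apply: cluster_rep; case: (clusterP x). Qed.

Lemma rep_of_in_Cb x : rep_of x \in Cb.
Proof. by case: (repP (clusterP x).1). Qed.

Lemma rep_of_idem x : rep_of (rep_of x) = rep_of x.
Proof. by rewrite {1}/rep_of cluster_rep_of. Qed.

Lemma rep_of_in_reps x : rep_of x \in reps.
Proof. by apply/imfsetP; exists (rep_of x); rewrite ?rep_of_in_Cb ?rep_of_idem. Qed.

Lemma rep_of_id b : b \in reps -> rep_of b = b.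
Proof. by case/imfsetP => b0 _ ->; rewrite rep_of_idem. Qed.

Lemma cluster_inj : {in reps &, injective cluster}.
Proof.
by move=> b1 b2 b1R b2R e; rewrite -(rep_of_id b1R) -(rep_of_id b2R) /rep_of e.
Qed.

Lemma cluster_image_reps : F = cluster @` [set` reps].
Proof.
apply/seteqP; split => [S FS|_ [b _ <-]]; last by case: (clusterP b).
exists (rep S); last exact: cluster_rep.
by rewrite /= -{1}(cluster_rep FS); apply: rep_of_in_reps.
Qed.

Lemma Idelta_eq_log2_reps (Om S : Type) (U : Om -> Y) (W : Om -> S) d :
  overlap_family m U W d F -> Idelta m U W d = (log2 #|` reps|%:R)%:E.
Proof.
by move=> F_family; apply: Idelta_fset_image F_family cluster_image_reps cluster_inj.
Qed.

Lemma card_reps_le : (#|` reps| <= #|` Cb|)%N.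
Proof. by apply/fsubset_leq_card/fsubsetP => _ /imfsetP[b _ ->]; apply: rep_of_in_Cb. Qed.

Lemma card_reps_gt0 (x : X) : (0 < #|` reps|)%N.
Proof. by rewrite cardfs_gt0; apply/fset0Pn; exists (rep_of x); apply: rep_of_in_reps. Qed.

Let t_le_reps : t <= d1 / #|` reps|.+1%:R.
Proof.
apply: le_trans t_le _; apply: (ler_wpM2l d1_ge0).
by rewrite lef_pV2 ?posrE ?ltr0n // ler_nat ltnS card_reps_le.
Qed.

Lemma overlap_le_cluster x y : cluster x <> cluster y -> m (N x `&` N y) <= t.
Proof.
move=> neq; have [Fx Nx] := clusterP x; have [Fy Ny] := clusterP y.
apply: le_trans (F_overlap Fx Fy neq); apply: (le_uncertainty hm).
by move=> z [Nxz Nyz]; split; [exact: Nx|exact: Ny].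
Qed.

Definition swap_code x x' := (x |` (x' |` (reps `\ rep_of x)))%fset.

Section SwapCode.
Variables x x' : X.
Hypotheses (xx' : x != x') (cxx' : cluster x = cluster x').

Let rep_of_x' : rep_of x' = rep_of x.
Proof. by rewrite /rep_of cxx'. Qed.

Let notin_reps y : rep_of y = rep_of x -> y \notin (reps `\ rep_of x)%fset.
Proof.
move=> ry; apply/negP => /fsetD1P[ne /rep_of_id yy].
by rewrite -yy ry eqxx in ne.
Qed.

Lemma card_swap_code : #|` swap_code x x'| = #|` reps|.+1.
Proof.
rewrite /swap_code cardfsU1 in_fset1U negb_or xx' notin_reps //=.
rewrite cardfsU1 notin_reps // (cardfsD1 (rep_of x) reps) rep_of_in_reps.
by rewrite !add1n.
Qed.

Lemma swap_code_overlap_le e : t <= e -> m (N x `&` N x') <= e ->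
  overlap_le N m (swap_code x x') e.
Proof.
move=> t_le_e xx'_le y1 y2 y1C y2C y12.
have same y : y \in swap_code x x' -> cluster y = cluster x -> y = x \/ y = x'.
  move=> + cy; rewrite !in_fset1U in_fsetD1.
  case/or3P=> [/eqP|/eqP|/andP[ne /rep_of_id yy]]; [by left|by right|].
  by rewrite -yy /rep_of cy eqxx in ne.
have other y : y \in swap_code x x' -> cluster y <> cluster x -> rep_of y = y.
  move=> + cy; rewrite !in_fset1U in_fsetD1.
  case/or3P=> [/eqP yx|/eqP yx|/andP[_ /rep_of_id //]];
    by exfalso; apply: cy; rewrite yx -?cxx'.
have [c12|c12] := eqVneq (cluster y1) (cluster y2); last first.
  by apply: le_trans t_le_e; apply: overlap_le_cluster; apply/eqP.
have [cy1|cy1] := pselect (cluster y1 = cluster x).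
  have cy2 : cluster y2 = cluster x by rewrite -c12.
  case: (same _ y1C cy1) (same _ y2C cy2) y12 => -> [] ->; rewrite ?eqxx // => _.
  by rewrite setIC.
have cy2 : cluster y2 <> cluster x by rewrite -c12.
by rewrite -(other _ y1C cy1) -(other _ y2C cy2) /rep_of c12 eqxx in y12.
Qed.

End SwapCode.

Hypothesis reps_max : forall C : {fset X}, C != fset0 ->
  overlap_le N m C (d1 / #|` C|%:R) -> (#|` C| <= #|` reps|)%N.

Lemma same_cluster_overlap_gt x x' : x != x' -> cluster x = cluster x' ->
  d1 / #|` reps|.+1%:R < m (N x `&` N x').
Proof.
move=> xx' cxx'; rewrite ltNge; apply/negP => le_xx'.
have swap_neq0 : swap_code x x' != fset0 by apply/fset0Pn; exists x; rewrite fset1U1.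
suff: (#|` swap_code x x'| <= #|` reps|)%N by rewrite card_swap_code // ltnn.
apply: reps_max swap_neq0 _; rewrite card_swap_code //.
exact: swap_code_overlap_le t_le_reps le_xx'.
Qed.

Lemma rep_of_eq_overlap_gt x x' : rep_of x = rep_of x' ->
  d1 / #|` reps|.+1%:R < m (N x `&` N x').
Proof.
move=> rxx'; have [<-|xx'] := eqVneq x x'.
  by rewrite setIid; apply: le_lt_trans (d1_lt_N x); rewrite ler_pdivn.
apply: same_cluster_overlap_gt => //.
by rewrite -cluster_rep_of rxx' cluster_rep_of.
Qed.

Variable mY : forall n, set (n.-tuple Y) -> R.
Arguments mY : clear implicits.
Hypothesis mY_prod : forall n (S : 'I_n -> set Y), (0 < n)%N ->
  mY n [set y | forall i, S i (tnth y i)] = \prod_(i < n) m (S i).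
Hypothesis mY_setT : forall n, (0 < n)%N -> mY n setT = 1.

Lemma rate_le_log2_reps (delta : nat -> R) (s : R) n : (0 < n)%N -> delta 1%N = d1 ->
  0 <= s <= t -> (forall n, (1 < n)%N -> 0 <= delta n <= s ^+ n) ->
  (rate N mY n (delta n) <= (log2 #|` reps|%:R)%:E)%E.
Proof.
move=> n_gt0 delta1 /andP[s_ge0 s_le_t] delta_le.
apply: rate_le_log2 => // C _ C_dist; rewrite leqNgt; apply/negP => C_big.
have C_gt0 : (0 < #|` C|)%N := leq_ltn_trans (leq0n _) C_big.
have f_overlap x x' : [` rep_of_in_reps x]%fset = [` rep_of_in_reps x']%fset ->
    d1 / #|` reps|.+1%:R < m (N x `&` N x').
  by move/(congr1 val) => /=; apply: rep_of_eq_overlap_gt.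
suff dn_le : delta n / #|` C|%:R <= (d1 / #|` reps|.+1%:R) ^+ n.
  have t_ge0 : 0 <= d1 / #|` reps|.+1%:R by rewrite divr_ge0.
  have := distinguishable_card_le (f := fun x => [` rep_of_in_reps x]%fset)
    mY_prod mY_setT t_ge0 f_overlap n_gt0 C_dist dn_le.
  by rewrite -cardfE leqNgt C_big.
clear C_dist f_overlap.
case: n n_gt0 C C_big C_gt0 => [//|[|n]] _ C C_big C_gt0.
  rewrite delta1 expr1; apply: (ler_wpM2l d1_ge0).
  by rewrite lef_pV2 ?posrE ?ltr0n // ler_nat -(expn1 #|` reps|).
have /andP[dn_ge0 dn_le] := delta_le n.+2 isT.
apply: le_trans (ler_pdivn dn_ge0 C_gt0) (le_trans dn_le _).
apply: lerXn2r; rewrite ?nnegrE ?divr_ge0 //.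
exact: le_trans s_le_t t_le_reps.
Qed.

Lemma log2_reps_le_rate1 : Cb != fset0 -> ((log2 #|` reps|%:R)%:E <= rate N mY 1 d1)%E.
Proof.
case/fset0Pn => x _; apply: (rate1_ge_log2 mY_prod mY_setT).
  by rewrite -cardfs_gt0 (card_reps_gt0 x).
move=> b1 b2 b1R b2R b12; apply: le_trans (overlap_le_cluster _) _.
  by move/(cluster_inj b1R b2R)/eqP; rewrite (negbTE b12).
apply: le_trans t_le_reps _; apply: (ler_wpM2l d1_ge0).
by rewrite lef_pV2 ?posrE ?ltr0n ?(card_reps_gt0 x) // ler_nat.
Qed.

Lemma capacity_eq_log2_reps (delta : nat -> R) (s : R) : Cb != fset0 ->
  delta 1%N = d1 -> 0 <= s <= t -> (forall n, (1 < n)%N -> 0 <= delta n <= s ^+ n) ->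
  capacity N mY delta = (log2 #|` reps|%:R)%:E.
Proof.
move=> Cb_neq0 delta1 s_bounds delta_le.
apply: capacity_eq => [n n_gt0|]; last by rewrite delta1; apply: log2_reps_le_rate1.
exact: rate_le_log2_reps n_gt0 delta1 s_bounds delta_le.
Qed.

End Clustering.

Unset Implicit Arguments.

Theorem theorem12 (R : realType) (X : pseudoMetricType R) (Y : Type)
  (hXtb : totally_bounded X) (hXsep : hausdorff_space X)
  (N : X -> set Y)
  (mX : set X -> R) (mY1 : set Y -> R) (mY : forall n, set (n.-tuple Y) -> R)
  (hmX : uncertainty_function mX)
  (hmY1 : uncertainty_function mY1) (hmY1T : mY1 setT = 1)
  (hmY : forall n, (0 < n)%N -> uncertainty_function (mY n) /\ mY n setT = 1)
  (xs : X) (hxs : forall x, mY1 (N xs) <= mY1 (N x))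
  (delta : nat -> R) (hd1 : 0 <= delta 1%N) (hd1V : delta 1%N < mY1 (N xs))
  (Cb : {fset X}) (db : R) (hdb : 0 <= db)
  (hCbF : inF1 N mX mY1 db Cb)
  (hdbC : db <= delta 1%N / mY1 (rangeY1 N Cb))
  (hsup : I1 N mY1 db Cb =
     ereal_sup [set v : \bar R | exists (dt : R) (C : {fset X}),
        0 <= dt /\ inF1 N mX mY1 dt C /\ dt <= delta 1%N / mY1 (rangeY1 N C) /\
        v = I1 N mY1 dt C])
  (ha : exists F, overlap_family mY1 (@chY X Y N Cb) (@chX X Y N Cb)
                    (db / (#|` Cb|)%:R) F /\
        forall x, x \notin Cb -> exists S, F S /\ N x `<=` S)
  (hb : db * (1 + 1 / (#|` Cb|)%:R) <= delta 1%N / mY1 (rangeY1 N Cb))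
  (hc : forall n, (1 < n)%N ->
        0 <= delta n <= (db * mY1 (N xs) / (#|` Cb|)%:R) ^+ n)
  (hprod : forall n (S : 'I_n -> set Y), (0 < n)%N ->
        mY n [set y | forall i, S i (tnth y i)] = \prod_(i < n) mY1 (S i))
  (hunion1 : forall S1 S2 : set Y, mY1 (S1 `|` S2) <= mY1 S1 + mY1 S2)
  (hunion : forall n, (0 < n)%N -> forall S1 S2 : set (n.-tuple Y),
        mY n (S1 `|` S2) <= mY n S1 + mY n S2) :
  capacity N mY delta = I1 N mY1 db Cb.
Proof.
have d1_lt_N x : delta 1%N < mY1 (N x) := lt_le_trans hd1V (hxs x).
have N_neq0 x : N x !=set0 := uncertainty_neq0 hmY1 (le_lt_trans hd1 (d1_lt_N x)).
have Cb_neq0 : Cb != fset0 by case: hCbF.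
have [x0 x0Cb] := fset0Pn _ Cb_neq0.
have V_le_rb : mY1 (N xs) <= mY1 (rangeY1 N Cb).
  exact: le_trans (hxs x0) (le_uncertainty hmY1 (sub_urange_chY x0Cb)).
have rb_gt0 : 0 < mY1 (rangeY1 N Cb).
  exact: lt_le_trans (le_lt_trans hd1 (d1_lt_N xs)) V_le_rb.
have [F [F_family F_out]] := ha; have [F_adm _] := F_family.
have F_overlap : forall S S', F S -> F S' -> S <> S' ->
    mY1 (S `&` S') <= db / #|` Cb|%:R * mY1 (rangeY1 N Cb) := F_adm.2.2.2.1.
have [cluster clusterP] := admissible_cover F_adm N_neq0 F_out.
have [rep repP] := admissible_rep F_adm Cb_neq0.
have t_le : db / #|` Cb|%:R * mY1 (rangeY1 N Cb) <= delta 1%N / #|` Cb|.+1%:R.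
  by apply: ler_divSn; rewrite ?cardfs_gt0.
have I1_eq : I1 N mY1 db Cb = (log2 #|` reps Cb cluster rep|%:R)%:E :=
  Idelta_eq_log2_reps hmY1 F_overlap hd1 d1_lt_N t_le clusterP repP F_family.
have reps_gt0 := card_reps_gt0 hmY1 F_overlap hd1 d1_lt_N t_le clusterP repP x0.
have I1_le dt C : 0 <= dt -> inF1 N mX mY1 dt C -> dt <= delta 1%N / mY1 (rangeY1 N C) ->
    (I1 N mY1 dt C <= (log2 #|` reps Cb cluster rep|%:R)%:E)%E.
  by rewrite -I1_eq hsup => *; apply: ereal_sup_ubound; exists dt, C.
have reps_max C : C != fset0 -> overlap_le N mY1 C (delta 1%N / #|` C|%:R) ->
    (#|` C| <= #|` reps Cb cluster rep|)%N.
  by move=> C_neq0; apply: code_card_le hmX hmY1 hd1 reps_gt0 I1_le C C_neq0 (in1W d1_lt_N).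
have s_bounds : 0 <= db * mY1 (N xs) / #|` Cb|%:R <= db / #|` Cb|%:R * mY1 (rangeY1 N Cb).
  by rewrite mulrAC ler_wpM2l ?divr_ge0 ?mulr_ge0 // (uncertainty_ge0 hmY1).
rewrite I1_eq; exact (capacity_eq_log2_reps hmY1 F_overlap hd1 d1_lt_N t_le clusterP repP
  reps_max hprod (fun n n_gt0 => (hmY n n_gt0).2) Cb_neq0 erefl s_bounds hc).
Qed.
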